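(* Let $1>\delta_1>\delta_2>0$ with $\delta_2<0.5$, and let $c:\mathbb{Z}^2\to\{0,1\}$ be a deterministic function such that for all $x,n$ it is never the case that $c(x,n)=c(x+1,n)=1$. Let $Z(n)$, $n\ge0$, be the random walk on $\mathbb{Z}$ with $Z(0)=0$ and the following transitions: if $Z(n)=x$ and $c(x,n)=c(x-1,n)=0$ then $Z(n+1)=x$; if $c(x,n)=1$ then $Z(n+1)=x+1$ with probability $\delta_1$ and $Z(n+1)=x$ otherwise; if $c(x-1,n)=1$ then $Z(n+1)=x-1$ with probability $\delta_2$ and $Z(n+1)=x$ otherwise. Let $\theta:=\frac{\delta_1\wedge0.5-\delta_2}{\delta_1\wedge0.5+\delta_2}>0$. Then for all $n\ge0$ and all integers $k\ge0$, $$\mathbb{P}[Z(n)\le-k]\le\mathrm{e}^{-\theta k}.$$ *)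

From Stdlib Require Import Reals ZArith Lra.
From Coquelicot Require Import Coquelicot.
Open Scope R_scope.

(* Environment c : Z^2 -> {0,1}, encoded as bool (true = 1). *)

Definition p_up (d1 : R) (c : Z -> Z -> bool) (x : Z) (n : nat) : R :=
  if c x (Z.of_nat n) then d1 else 0.
Definition p_down (d2 : R) (c : Z -> Z -> bool) (x : Z) (n : nat) : R :=
  if c (x - 1)%Z (Z.of_nat n) then d2 else 0.
Definition p_stay (d1 d2 : R) (c : Z -> Z -> bool) (x : Z) (n : nat) : R :=
  1 - p_up d1 c x n - p_down d2 c x n.

(* law d1 d2 c n y = P[Z(n) = y], defined by the Chapman–Kolmogorov
   recursion of the Markov chain started at Z(0) = 0. *)
Fixpoint law (d1 d2 : R) (c : Z -> Z -> bool) (n : nat) (y : Z) : R :=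
  match n with
  | O => if Z.eqb y 0 then 1 else 0
  | S m => law d1 d2 c m y * p_stay d1 d2 c y m
         + law d1 d2 c m (y - 1)%Z * p_up d1 c (y - 1)%Z m
         + law d1 d2 c m (y + 1)%Z * p_down d2 c (y + 1)%Z m
  end.

(* P[Z(n) <= -k] = sum over all y <= -k, i.e. y = -k - j, j >= 0. *)
Definition prob_le_neg (d1 d2 : R) (c : Z -> Z -> bool) (n k : nat) : R :=
  Series (fun j : nat => law d1 d2 c n (- Z.of_nat k - Z.of_nat j)%Z).

Definition theta (d1 d2 : R) : R :=
  (Rmin d1 (1/2) - d2) / (Rmin d1 (1/2) + d2).

(* The function F_n(m) := P[Z(n) <= m] evolves by a local rule: at time n it only changes at
   sites m with c(m, n) = 1, where F_(n+1)(m) = F_n(m) - d1 (F_n(m) - F_n(m-1)) + d2 (F_n(m+1) - F_n(m)).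
   Since F_n is nondecreasing, replacing d1 by a := min(d1, 1/2) can only increase the right-hand side,
   which then becomes an average of F_n(m-1), F_n(m), F_n(m+1) with nonnegative weights.
   The barrier b(m) := exp(theta * min(m, 0)) is superharmonic for these weights as soon as
   d2 * exp theta <= a, which holds for theta = (a - d2) / (a + d2) because exp(1 - u) <= 1/u.
   Hence F_n <= b for all n by induction, and F_n(-k) <= exp(-theta k). *)
From Stdlib Require Import Reals ZArith Lra Lia.
From Coquelicot Require Import Coquelicot.
Open Scope R_scope.

Definition cdf (h : Z -> R) (m : Z) : R := Series (fun j : nat => h (m - Z.of_nat j)%Z).

Lemma is_series_0 : is_series (fun _ : nat => 0) 0.
Proof.
  assert (H := is_series_scal_l 0 _ _ (is_series_geom 0 ltac:(rewrite Rabs_R0; lra))).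
  rewrite Rmult_0_l in H.
  apply is_series_ext with (2 := H); intros j; apply Rmult_0_l.
Qed.

Section TailSums.

Variables (h : Z -> R) (L : Z).
Hypothesis h_vanishes : forall y, (y < L)%Z -> h y = 0.

Lemma ex_series_cdf (m : Z) : ex_series (fun j : nat => h (m - Z.of_nat j)%Z).
Proof.
  apply (ex_series_incr_n _ (Z.to_nat (m - L + 1))).
  exists 0; apply is_series_ext with (2 := is_series_0).
  intros j; symmetry; apply h_vanishes; lia.
Qed.

Lemma cdf_below (m : Z) : (m < L)%Z -> cdf h m = 0.
Proof.
  intros Hm; apply is_series_unique, is_series_ext with (2 := is_series_0).
  intros j; symmetry; apply h_vanishes; lia.
Qed.

Lemma cdf_pred (m : Z) : cdf h m = h m + cdf h (m - 1).
Proof.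
  unfold cdf; rewrite Series_incr_1 by apply ex_series_cdf.
  f_equal; [f_equal; lia |].
  apply Series_ext; intros j; f_equal; lia.
Qed.

Lemma cdf_unique (F : Z -> R) :
  (forall m, (m < L)%Z -> F m = 0) -> (forall m, F m = h m + F (m - 1)%Z) ->
  forall m, cdf h m = F m.
Proof.
  intros F_vanishes F_pred m.
  destruct (Z_lt_le_dec m L) as [Hm | Hm].
  { rewrite cdf_below, F_vanishes by exact Hm; reflexivity. }
  replace m with (L + Z.of_nat (Z.to_nat (m - L)))%Z by lia.
  induction (Z.to_nat (m - L)) as [| k IH].
  - rewrite cdf_pred, F_pred, cdf_below, F_vanishes by lia; reflexivity.
  - rewrite cdf_pred, F_pred.
    replace (L + Z.of_nat (S k) - 1)%Z with (L + Z.of_nat k)%Z by lia.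
    rewrite IH; reflexivity.
Qed.

End TailSums.

Section Walk.

Variables (d1 d2 : R) (c : Z -> Z -> bool).

Lemma law_vanishes_below (n : nat) (y : Z) : (y < - Z.of_nat n)%Z -> law d1 d2 c n y = 0.
Proof.
  revert y; induction n as [| n IH]; intros y Hy; simpl.
  - destruct (Z.eqb_spec y 0); [lia | reflexivity].
  - rewrite !IH by lia; ring.
Qed.

Lemma cdf_law_succ (n : nat) (m : Z) :
  cdf (law d1 d2 c (S n)) m =
  cdf (law d1 d2 c n) m - law d1 d2 c n m * p_up d1 c m n
  + law d1 d2 c n (m + 1) * p_down d2 c (m + 1) n.
Proof.
  set (l := law d1 d2 c n).
  assert (l_vanishes : forall y, (y < - Z.of_nat n)%Z -> l y = 0) by apply law_vanishes_below.
  revert m; apply (cdf_unique _ _ (law_vanishes_below (S n))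
    (fun m => cdf l m - l m * p_up d1 c m n + l (m + 1)%Z * p_down d2 c (m + 1) n)).
  - intros m' Hm'; rewrite (cdf_below l (- Z.of_nat n)), !l_vanishes by (auto; lia); ring.
  - intros m'; rewrite (cdf_pred l (- Z.of_nat n)) by exact l_vanishes.
    replace (m' - 1 + 1)%Z with m' by lia.
    simpl law; unfold p_stay; fold l; ring.
Qed.

Hypotheses (Hd1 : 0 <= d1 <= 1) (Hd2 : 0 <= d2 <= 1)
  (Hc : forall x n : Z, ~ (c x n = true /\ c (x + 1)%Z n = true)).

Lemma p_stay_nonneg (y : Z) (n : nat) : 0 <= p_stay d1 d2 c y n.
Proof.
  unfold p_stay, p_up, p_down.
  destruct (c y (Z.of_nat n)) eqn:Ey, (c (y - 1)%Z (Z.of_nat n)) eqn:Ey'; try lra.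
  exfalso; apply (Hc (y - 1)%Z (Z.of_nat n)).
  replace (y - 1 + 1)%Z with y by lia; auto.
Qed.

Lemma law_nonneg (n : nat) (y : Z) : 0 <= law d1 d2 c n y.
Proof.
  revert y; induction n as [| n IH]; intros y; simpl.
  - destruct (y =? 0)%Z; lra.
  - assert (0 <= p_up d1 c (y - 1) n) by (unfold p_up; destruct c; lra).
    assert (0 <= p_down d2 c (y + 1) n) by (unfold p_down; destruct c; lra).
    assert (Hstay := p_stay_nonneg y n).
    repeat apply Rplus_le_le_0_compat; apply Rmult_le_pos; auto.
Qed.

Variables (a : R) (b : Z -> R).
Hypotheses (Ha : 0 <= a <= d1) (Had2 : a + d2 <= 1)
  (b_nonneg : forall m, 0 <= b m) (b_ge1 : forall m, (0 <= m)%Z -> 1 <= b m)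
  (b_superharmonic : forall m, a * b (m - 1)%Z + d2 * b (m + 1)%Z <= (a + d2) * b m).

Lemma cdf_law0_le_barrier (m : Z) : cdf (law d1 d2 c 0) m <= b m.
Proof.
  rewrite (cdf_unique _ _ (law_vanishes_below 0) (fun m => if (m <? 0)%Z then 0 else 1)).
  - destruct (Z.ltb_spec m 0); auto.
  - intros y Hy; destruct (Z.ltb_spec y 0); lia || reflexivity.
  - intros y; simpl.
    destruct (Z.ltb_spec y 0), (Z.eqb_spec y 0), (Z.ltb_spec (y - 1) 0); lia || lra.
Qed.

Lemma cdf_law_le_barrier (n : nat) (m : Z) : cdf (law d1 d2 c n) m <= b m.
Proof.
  revert m; induction n as [| n IH]; intros m; [apply cdf_law0_le_barrier |].
  set (F := cdf (law d1 d2 c n)).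
  assert (law_incr : forall y, law d1 d2 c n y = F y - F (y - 1)%Z).
  { intros y; unfold F; rewrite (cdf_pred _ (- Z.of_nat n) (law_vanishes_below n) y); ring. }
  assert (F_mono : F (m - 1)%Z <= F m) by (generalize (law_nonneg n m); rewrite law_incr; lra).
  rewrite cdf_law_succ; fold F; unfold p_up, p_down.
  replace (m + 1 - 1)%Z with m by lia.
  destruct (c m (Z.of_nat n)); [| generalize (IH m); fold F; lra].
  rewrite !law_incr; replace (m + 1 - 1)%Z with m by lia.
  assert (Hsuper := b_superharmonic m).
  assert (Hm := IH m); assert (Hm1 := IH (m - 1)%Z); assert (Hp1 := IH (m + 1)%Z).
  fold F in Hm, Hm1, Hp1.
  (* Lowering d1 to a only adds the nonnegative term (d1 - a) (F m - F (m - 1)). *)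
  assert ((d1 - a) * (F m - F (m - 1)%Z) >= 0) by nra.
  assert (a * (b (m - 1)%Z - F (m - 1)%Z) >= 0) by nra.
  assert (d2 * (b (m + 1)%Z - F (m + 1)%Z) >= 0) by nra.
  assert ((1 - a - d2) * (b m - F m) >= 0) by nra.
  nra.
Qed.

End Walk.

Lemma exp_le_exp (x y : R) : x <= y -> exp x <= exp y.
Proof.
  intros [Hxy | ->]; [left; apply exp_increasing; exact Hxy | right; reflexivity].
Qed.

Lemma exp_one_sub_le_inv (u : R) : 0 < u -> exp (1 - u) <= / u.
Proof.
  intros Hu.
  assert (Hexp : u <= exp (u - 1)) by (generalize (exp_ineq1_le (u - 1)); lra).
  replace (1 - u) with (- (u - 1)) by ring; rewrite exp_Ropp.
  apply Rinv_le_contravar; assumption.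
Qed.

Lemma drift_exp_le (a d2 : R) : 0 < d2 < a -> d2 * exp ((a - d2) / (a + d2)) <= a.
Proof.
  intros [Hd2 Ha].
  set (u := d2 / a).
  assert (Hu : 0 < u) by (apply Rdiv_lt_0_compat; lra).
  assert (Hexponent : (a - d2) / (a + d2) <= 1 - u).
  { replace (1 - u) with ((a - d2) / a) by (unfold u; field; lra).
    apply Rmult_le_compat_l; [lra |]; apply Rinv_le_contravar; lra. }
  apply Rle_trans with (d2 * / u).
  - apply Rmult_le_compat_l; [lra |].
    apply Rle_trans with (exp (1 - u)); [apply exp_le_exp | apply exp_one_sub_le_inv]; assumption.
  - right; unfold u; field; lra.
Qed.

Definition exp_barrier (th : R) (m : Z) : R := exp (th * IZR (Z.min m 0)).

Lemma exp_barrier_superharmonic (a d2 th : R) :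
  0 <= th -> 0 <= a -> 0 <= d2 -> d2 * exp th <= a ->
  forall m, a * exp_barrier th (m - 1) + d2 * exp_barrier th (m + 1) <= (a + d2) * exp_barrier th m.
Proof.
  intros Hth Ha Hd2 Hdrift m; unfold exp_barrier.
  destruct (Z_lt_le_dec 0 m) as [Hm | Hm].
  { rewrite !Z.min_r by lia; lra. }
  rewrite (Z.min_l m), (Z.min_l (m - 1)) by lia.
  set (B := exp (th * IZR m)); set (r := exp th) in *.
  assert (HB : 0 < B) by apply exp_pos.
  assert (Hr : 1 <= r) by (rewrite <- exp_0; apply exp_le_exp; exact Hth).
  assert (Hdown : exp (th * IZR (m - 1)) = B / r).
  { unfold B, r, Rdiv; rewrite minus_IZR, <- exp_Ropp, <- exp_plus; f_equal; ring. }
  assert (Hup : exp (th * IZR (Z.min (m + 1) 0)) <= B * r).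
  { unfold B, r; rewrite <- exp_plus; apply exp_le_exp.
    assert (IZR (Z.min (m + 1) 0) <= IZR m + 1) by (rewrite <- plus_IZR; apply IZR_le; lia).
    nra. }
  rewrite Hdown.
  assert (Hinv : / r <= 1) by (rewrite <- Rinv_1; apply Rinv_le_contravar; lra).
  assert (Hgain : 0 <= B * ((a - d2 * r) * (1 - / r)))
    by (apply Rmult_le_pos; [lra | apply Rmult_le_pos; lra]).
  assert (Hsplit : a * (B / r) + d2 * (B * r) - (a + d2) * B = - (B * ((a - d2 * r) * (1 - / r))))
    by (field; lra).
  assert (d2 * exp (th * IZR (Z.min (m + 1) 0)) <= d2 * (B * r)) by (apply Rmult_le_compat_l; lra).
  lra.
Qed.

Theorem lemmaA1 (d1 d2 : R) (c : Z -> Z -> bool)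
  (Hd1 : d1 < 1) (Hd12 : d2 < d1) (Hd2 : 0 < d2) (Hd2h : d2 < 1/2)
  (Hc : forall x n : Z, ~ (c x n = true /\ c (x + 1)%Z n = true)) :
  forall n k : nat, prob_le_neg d1 d2 c n k <= exp (- theta d1 d2 * INR k).
Proof.
  intros n k.
  set (a := Rmin d1 (1/2)).
  assert (Ha : d2 < a <= d1 /\ a <= 1/2).
  { unfold a, Rmin; destruct Rle_dec; lra. }
  set (th := theta d1 d2).
  assert (Hth : 0 <= th) by (apply Rdiv_le_0_compat; fold a; lra).
  assert (Hdrift : d2 * exp th <= a) by (apply drift_exp_le; lra).
  apply Rle_trans with (exp_barrier th (- Z.of_nat k)).
  - apply (cdf_law_le_barrier d1 d2 c) with (a := a); try lra; auto.
    + intros m; left; apply exp_pos.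
    + intros m Hm; unfold exp_barrier; rewrite Z.min_r, Rmult_0_r, exp_0 by lia; lra.
    + apply exp_barrier_superharmonic; lra.
  - unfold exp_barrier; rewrite Z.min_l, opp_IZR, <- INR_IZR_INZ by lia.
    right; f_equal; ring.
Qed.
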